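(* Let $P$ be an EVM program, let $(\mathcal{X}_{pc})_{pc}$ be the least solution of the addresses equation system $\mathcal{E}(P)$, and let $\xi_P=\bigcup_{m>0}\mathcal{C}_P^m(X_0)$ be the collecting semantics of $P$. For every program point $pc$ and every stack state $\langle n,\sigma\rangle$ such that some pair $\langle S,S'\rangle\in\xi_P$ has $S'=\langle pc,\langle n,\sigma\rangle\rangle$ (equivalently, the program state $\langle pc,\langle n,\sigma\rangle\rangle$ is reachable from $S_0=\langle 0,\langle 0,\sigma_\emptyset\rangle\rangle$ by the transition relation $\Rightarrow$), there exists $s\in dom(\mathcal{X}_{pc})$ such that $\langle n,\sigma\rangle\in\mathcal{X}_{pc}(s)$.
   Context: EVM programs. An EVM program $P\equiv b_0,\dots,b_p$ is a finite sequence of instructions, each located at a program counter (byte offset); $b_{pc}$ denotes the instruction at program counter $pc$, and $size(b)$ is the number of bytes of instruction $b$ (e.g. $size(\texttt{POP})=1$, $size(\texttt{PUSH}x\ v)=x+1$), so the instruction following $b_{pc}$ is at $pc+size(b_{pc})$. Let $Jump=\{\texttt{JUMP},\texttt{JUMPI}\}$, $End=\{\texttt{REVERT},\texttt{STOP},\texttt{INVALID}\}$, and $\mathcal{J}(P)=\{pc\mid b_{pc}\equiv\texttt{JUMPDEST}\}$ (possible jump destinations). Each instruction $b$ other than those treated specially removes $\delta$ items from and then places $\alpha$ items on the stack (written $b^{\delta,\alpha}$). Stack states. A stack state is a pair $\langle n,\sigma\rangle$ where $n\ge 0$ is the number of stack elements (bounded by a fixed constant, the stack has positions $s_0,\dots,s_{n-1}$,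 top $s_{n-1}$) and $\sigma$ is a partial map from positions to finite sets of jump destinations. $\sigma_\emptyset$ is the empty map; $m[x\mapsto y]$ is $m$ updated at $x$; $m\backslash[x_1,\dots,x_k]$ is $m$ with $x_1,\dots,x_k$ removed from the domain. Simplified semantics. Program states are $\langle pc,\langle n,\sigma\rangle\rangle$; the transition relation $\Rightarrow$ is given by: (1) $b_{pc}=\texttt{JUMP}$: $\langle pc,\langle n,\sigma\rangle\rangle\Rightarrow\langle v,\langle n-1,\sigma\backslash[s_{n-1}]\rangle\rangle$ where $\sigma(s_{n-1})=\{v\}$; (2) $b_{pc}=\texttt{JUMPI}$: $\Rightarrow\langle v,\langle n-2,\sigma\backslash[s_{n-1},s_{n-2}]\rangle\rangle$ with $\sigma(s_{n-1})=\{v\}$; (3) $b_{pc}=\texttt{JUMPI}$: $\Rightarrow\langle pc+size(b_{pc}),\langle n-2,\sigma\backslash[s_{n-1},s_{n-2}]\rangle\rangle$; in all remaining rules the new program counter is $pc+size(b_{pc})$ and the new stack state is $\lambda(b_{pc},\langle n,\sigma\rangle)$ defined below, for $b_{pc}\notin Jump\cup End$. No transition exists from $b_{pc}\in End$. Update function $\lambda$ on stack states: $\lambda(\texttt{JUMP},\langle n,\sigma\rangle)=\langle n-1,\sigma\backslash[s_{n-1}]\rangle$; $\lambda(\texttt{JUMPI},\langle n,\sigma\rangle)=\langle n-2,\sigma\backslash[s_{n-1},s_{n-2}]\rangle$; $\lambda(\texttt{PUSH}x\ v,\langle n,\sigma\rangle)=\langle n+1,\sigma[s_n\mapsto\{v\}]\rangle$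 if $v\in\mathcal{J}(P)$ and $\langle n+1,\sigma\rangle$ otherwise; $\lambda(\texttt{DUP}x,\langle n,\sigma\rangle)=\langle n+1,\sigma[s_n\mapsto\sigma(s_{n-x})]\rangle$ if $s_{n-x}\in dom(\sigma)$, else $\langle n+1,\sigma\rangle$; $\lambda(\texttt{SWAP}x,\langle n,\sigma\rangle)=\langle n,\sigma'\rangle$ where $\sigma'$ is $\sigma$ with the contents (defined or undefined) of positions $s_{n-1}$ and $s_{n-x-1}$ exchanged; for any other $b^{\delta,\alpha}\notin End$: $\lambda(b,\langle n,\sigma\rangle)=\langle n-\delta+\alpha,\sigma\backslash[s_{n-1},\dots,s_{n-\delta}]\rangle$. Abstract domain. An abstract state is a partial map $\pi$ from stack states to sets of stack states. $\pi_1\sqsubseteq\pi_2$ iff $dom(\pi_1)\subseteq dom(\pi_2)$ and $\pi_1(s)\subseteq\pi_2(s)$ for all $s\in dom(\pi_1)$; the join is $(\pi_1\sqcup\pi_2)(s)=img(\pi_1,s)\cup img(\pi_2,s)$ on $dom(\pi_1)\cup dom(\pi_2)$, with $img(\pi,s)=\pi(s)$ if $s\in dom(\pi)$ and $\emptyset$ otherwise; the bottom $\pi_\bot$ is the empty map. Transfer function: $\tau(b,\pi)$ has domain $dom(\pi)$ and $\tau(b,\pi)(s)=\{\lambda(b,t)\mid t\in\pi(s)\}$. For a stack state $t$, $idmap(t)$ is the map with domain $\{t\}$ sending $t$ to $\{t\}$. Addresses equation system $\mathcal{E}(P)$: one variable $\mathcal{X}_{pc}$ (an abstract state, describing stack states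 before executing $b_{pc}$, indexed by the entry stack state of the enclosing block) per program point, with constraints: $\mathcal{X}_0\sqsupseteq idmap(\langle 0,\sigma_\emptyset\rangle)$; (1) if $b_{pc}=\texttt{JUMP}$: for all $s\in dom(\mathcal{X}_{pc})$, $\langle n,\sigma\rangle\in\mathcal{X}_{pc}(s)$ and $v\in\sigma(s_{n-1})$, $\mathcal{X}_v\sqsupseteq idmap(\lambda(b_{pc},\langle n,\sigma\rangle))$; (2) if $b_{pc}=\texttt{JUMPI}$: the same constraints, plus $\mathcal{X}_{pc+1}\sqsupseteq idmap(\lambda(b_{pc},\langle n,\sigma\rangle))$ for all such $s,\langle n,\sigma\rangle$; (3) if $b_{pc}\notin End\cup Jump$ and $b_{pc+size(b_{pc})}=\texttt{JUMPDEST}$: $\mathcal{X}_{pc+size(b_{pc})}\sqsupseteq idmap(\lambda(b_{pc},\langle n,\sigma\rangle))$ for all $s\in dom(\mathcal{X}_{pc})$, $\langle n,\sigma\rangle\in\mathcal{X}_{pc}(s)$; (4) otherwise, if $b_{pc}\notin End\cup Jump$: $\mathcal{X}_{pc+size(b_{pc})}\sqsupseteq\tau(b_{pc},\mathcal{X}_{pc})$. The least solution is the pointwise $\sqsubseteq$-least assignment satisfying all constraints. Collecting semantics: $\mathcal{C}_P(X)=\{\langle S,S'\rangle\mid\langle\_,S\rangle\in X\wedge S\Rightarrow S'\}$, $X_0=\{\langle\_,\langle 0,\langle 0,\sigma_\emptyset\rangle\rangle\rangle\}$ (initial configuration), $\xi_P=\bigcup_{m>0}\mathcal{C}_P^m(X_0)$.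 *)

From mathcomp Require Import all_boot.
Set Implicit Arguments. Unset Strict Implicit. Unset Printing Implicit Defensive.

(* OP delta alpha : any instruction b^{delta,alpha} not treated specially
   (e.g. POP = OP 1 0, ADD = OP 2 1). *)
Inductive instr :=
| JUMP | JUMPI | JUMPDEST
| PUSH (x : nat) (v : nat)
| DUP (x : nat) | SWAP (x : nat)
| REVERT | STOP | INVALID
| OP (delta alpha : nat).

Definition isize (b : instr) : nat :=
  match b with PUSH x _ => x + 1 | _ => 1 end.

Definition is_jump (b : instr) : bool :=
  match b with JUMP | JUMPI => true | _ => false end.
Definition is_end (b : instr) : bool :=
  match b with REVERT | STOP | INVALID => true | _ => false end.

(** An EVM program is a finite sequence of instructions b_0, ..., b_p;
    the first is at program counter 0, and the one following b_pc is at
    pc + size(b_pc). *)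
Definition program := seq instr.

Fixpoint instr_at_from (l : seq instr) (off pc : nat) : option instr :=
  match l with
  | [::] => None
  | b :: l' => if off == pc then Some b else instr_at_from l' (off + isize b) pc
  end.

Definition instr_at (P : program) (pc : nat) : option instr := instr_at_from P 0 pc.

Definition is_jumpdest (P : program) (pc : nat) : bool :=
  match instr_at P pc with Some JUMPDEST => true | _ => false end.

Definition pset (T : Type) := T -> Prop.
Definition single (v : nat) : pset nat := fun w => w = v.

(* <n, sigma>: sigma is a partial map from positions s_i (i : nat) to sets of
   jump destinations. *)
Record sstate := SS { ssn : nat; sss : nat -> option (pset nat) }.

Definition sigma_empty : nat -> option (pset nat) := fun _ => None.

Definition upd (s : nat -> option (pset nat)) (x : nat) (y : option (pset nat)) :=
  fun p => if p == x then y else s p.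

Definition remove_top (s : nat -> option (pset nat)) (n d : nat) :=
  fun p => if (n - d <= p) && (p < n) then None else s p.

Definition lam (P : program) (b : instr) (t : sstate) : sstate :=
  let n := ssn t in let s := sss t in
  match b with
  | JUMP => SS (n - 1) (remove_top s n 1)
  | JUMPI => SS (n - 2) (remove_top s n 2)
  | PUSH _ v =>
      if is_jumpdest P v then SS (n + 1) (upd s n (Some (single v)))
      else SS (n + 1) s
  | DUP x =>
      match s (n - x) with
      | Some St => SS (n + 1) (upd s n (Some St))
      | None => SS (n + 1) s
      end
  | SWAP x =>
      SS n (fun p => if p == n - 1 then s (n - x - 1)
                     else if p == n - x - 1 then s (n - 1) else s p)
  | JUMPDEST => SS n s
  | OP d a => SS (n - d + a) (remove_top s n d)
  | REVERT | STOP | INVALID => t (* lambda is not used on End *)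
  end.

Definition pstate := (nat * sstate)%type.

Inductive step (P : program) : pstate -> pstate -> Prop :=
| step_jump pc t v :
    instr_at P pc = Some JUMP ->
    sss t (ssn t - 1) = Some (single v) ->
    step P (pc, t) (v, lam P JUMP t)
| step_jumpi_taken pc t v :
    instr_at P pc = Some JUMPI ->
    sss t (ssn t - 1) = Some (single v) ->
    step P (pc, t) (v, lam P JUMPI t)
| step_jumpi_fall pc t :
    instr_at P pc = Some JUMPI ->
    step P (pc, t) (pc + isize JUMPI, lam P JUMPI t)
| step_other pc t b :
    instr_at P pc = Some b -> ~~ is_jump b -> ~~ is_end b ->
    step P (pc, t) (pc + isize b, lam P b t).

Definition S0 : pstate := (0, SS 0 sigma_empty).

Definition collect (P : program) (X : pset (pstate * pstate)) : pset (pstate * pstate) :=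
  fun pr => exists U, X (U, pr.1) /\ step P pr.1 pr.2.

Definition X0 : pset (pstate * pstate) := fun pr => pr.2 = S0.

Definition xi (P : program) : pset (pstate * pstate) :=
  fun pr => exists m, 0 < m /\ iter m (collect P) X0 pr.

Definition astate := sstate -> option (pset sstate).

Definition aleq (p1 p2 : astate) : Prop :=
  forall s S1, p1 s = Some S1 ->
    exists S2, p2 s = Some S2 /\ (forall t, S1 t -> S2 t).

(* idmap(t) [= p, written out: idmap(t) has domain {t} and maps t to {t}. *)
Definition idmap_le (t : sstate) (p : astate) : Prop :=
  exists S2, p t = Some S2 /\ S2 t.

Definition tau (P : program) (b : instr) (p : astate) : astate :=
  fun s => match p s with
           | Some St => Some (fun u => exists t, St t /\ u = lam P b t)
           | None => None
           end.

Definition satisfies (P : program) (X : nat -> astate) : Prop :=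
  idmap_le (SS 0 sigma_empty) (X 0) /\
  forall pc,
    match instr_at P pc with
    | Some JUMP =>
        forall s St t V v, X pc s = Some St -> St t ->
          sss t (ssn t - 1) = Some V -> V v ->
          idmap_le (lam P JUMP t) (X v)
    | Some JUMPI =>
        (forall s St t V v, X pc s = Some St -> St t ->
          sss t (ssn t - 1) = Some V -> V v ->
          idmap_le (lam P JUMPI t) (X v)) /\
        (forall s St t, X pc s = Some St -> St t ->
          idmap_le (lam P JUMPI t) (X (pc + 1)))
    | Some b =>
        if is_end b then True
        else if is_jumpdest P (pc + isize b) then
          forall s St t, X pc s = Some St -> St t ->
            idmap_le (lam P b t) (X (pc + isize b))
        else aleq (tau P b (X pc)) (X (pc + isize b))
    | None => True
    end.

Definition least_solution (P : program) (X : nat -> astate) : Prop :=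
  satisfies P X /\ forall Y, satisfies P Y -> forall pc, aleq (X pc) (Y pc).

From mathcomp Require Import all_boot.
Set Implicit Arguments. Unset Strict Implicit.

(* Call a program state <pc, t> covered by X when t belongs to
   X_pc(s) for some entry state s.  The proof is a simulation argument:
   - the initial state S0 is covered, by the initial constraint of E(P);
   - every transition S => S' maps covered states to covered states, since
     each rule of the semantics is mirrored by one constraint of E(P)
     (JUMP/JUMPI-taken by constraints (1)/(2) at the jump target, JUMPI
     fall-through by (2), every other instruction by (3) or (4));
   - hence, by induction on m, the target of every pair in C_P^m(X0) is
     covered, which is the theorem.
   Only the fact that X satisfies E(P) is used, so the result holds for any
   solution, in particular the least one. *)

Definition covered (X : nat -> astate) (p : pstate) : Prop :=
  exists s Ss, X p.1 s = Some Ss /\ Ss p.2.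

Lemma covered_of_idmap (X : nat -> astate) (pc : nat) (t : sstate) :
  idmap_le t (X pc) -> covered X (pc, t).
Proof. by move=> [S2 [HX Ht]]; exists t, S2. Qed.

Lemma covered_init (P : program) (X : nat -> astate) :
  satisfies P X -> covered X S0.
Proof. by move=> [Hinit _]; apply: covered_of_idmap. Qed.

Lemma satisfies_sequential (P : program) (X : nat -> astate) (pc : nat) (b : instr) :
  satisfies P X -> instr_at P pc = Some b -> ~~ is_jump b -> ~~ is_end b ->
  if is_jumpdest P (pc + isize b) then
    forall s St t, X pc s = Some St -> St t ->
      idmap_le (lam P b t) (X (pc + isize b))
  else aleq (tau P b (X pc)) (X (pc + isize b)).
Proof.
move=> [_ HX] Hb Hjump Hend; move: (HX pc); rewrite Hb.
by case: b Hb Hjump Hend.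
Qed.

(* A sequential step from a covered state leads to a covered state: under
   (3) the successor is covered with entry state lambda(b, t) itself, under
   (4) it stays in the same entry class s, transported by tau. *)
Lemma covered_sequential (P : program) (X : nat -> astate) (pc : nat)
    (b : instr) (t : sstate) :
  satisfies P X -> instr_at P pc = Some b -> ~~ is_jump b -> ~~ is_end b ->
  covered X (pc, t) -> covered X (pc + isize b, lam P b t).
Proof.
move=> HS Hb Hjump Hend [s [Ss [Hs Ht]]].
move: (satisfies_sequential HS Hb Hjump Hend).
case: (is_jumpdest _ _) => [Hidmap | Htau].
- exact/covered_of_idmap/(Hidmap s Ss t Hs Ht).
- have Hts : tau P b (X pc) s = Some (fun u => exists t0, Ss t0 /\ u = lam P b t0).
    by rewrite /tau Hs.
  have [S2 [HS2 Hsub]] := Htau s _ Hts.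
  by exists s, S2; split => //; apply: Hsub; exists t.
Qed.

Lemma covered_step (P : program) (X : nat -> astate) (p q : pstate) :
  satisfies P X -> covered X p -> step P p q -> covered X q.
Proof.
move=> HS Hp Hstep; case: Hstep Hp => [pc t v Hb Hv | pc t v Hb Hv | pc t Hb |
                                       pc t b Hb Hjump Hend] Hp;
  last exact: covered_sequential HS Hb Hjump Hend Hp.
all: move: Hp (HS) => [s [Ss [Hs Ht]]] [_ /(_ pc)]; rewrite Hb.
- by move=> Hjmp; apply/covered_of_idmap/(Hjmp s Ss t _ v Hs Ht Hv).
- by move=> [Htaken _]; apply/covered_of_idmap/(Htaken s Ss t _ v Hs Ht Hv).
- by move=> [_ Hfall]; apply/covered_of_idmap/(Hfall s Ss t Hs Ht).
Qed.

Lemma covered_collect (P : program) (X : nat -> astate) (m : nat) (pr : pstate * pstate) :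
  satisfies P X -> iter m (collect P) X0 pr -> covered X pr.2.
Proof.
move=> HS; elim: m pr => [|m IH] pr /=.
- by rewrite /X0 => ->; exact: covered_init HS.
- move=> [U [HU Hstep]]; apply: covered_step HS _ Hstep.
  exact: (IH (U, pr.1)).
Qed.

Theorem lemma1 (P : program) (X : nat -> astate) :
  least_solution P X ->
  forall (pc n : nat) (sigma : nat -> option (pset nat)),
    (exists S1, xi P (S1, (pc, SS n sigma))) ->
    exists s Ss, X pc s = Some Ss /\ Ss (SS n sigma).
Proof.
move=> [HS _] pc n sigma [S1 [m [_ Hm]]].
exact: (covered_collect HS Hm).
Qed.
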